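(* Let $E$ be a closed formula in which all bound variables are pairwise distinct, and let $x$ be a variable bound in $E$. Let $[\Gamma]_{V(x)}$ be a normal item occurring in (a context of a sequent of) a derivation of $\vdash E$ in LJB, and let $z$ be a free variable of $[\Gamma]_{V(x)}$. Then $x$ is in the scope of $z$.
   Context: Formulas: $A ::= P(t_1,\dots,t_n)\mid A\rightarrow A\mid\forall x\,A$, with first-order terms. A formula is a tree with nodes labelled by atomic formulas, $\rightarrow$, or $\forall x$; positions are node addresses ordered by prefix. In $E$ each bound variable $x$ labels a unique position $\forall x$; a variable $y$ is in the scope of $x$ if the position labelled $\forall x$ is a strict prefix of that labelled $\forall y$. $V(x)$ is the set of variables bound in the subformula $\forall x\,A$ of $E$ at position $\forall x$ (equivalently $x$ together with all variables in the scope of $x$). LJB: an LJB-context is a finite multiset of items; an item is a formula or $[\Gamma]_V$ ($V$ a finite set of variables bound by the bracket, $\Gamma$ an LJB-context); $FV([\Gamma]_V)=FV(\Gamma)\setminus V$. Cleaning rules (anywhere in a context): $[I,\Gamma]_V\longrightarrow I,[\Gamma]_V$ if $FV(I)\cap V=\emptyset$; $[\ ]_V\longrightarrow\emptyset$; $I\,I\longrightarrow I$; an item is normal if no cleaning rule applies inside it; $\Gamma{\downarrow}$ is the normal form for a fixed strategy. LJB rules apply only to LJB-sequents with normal context in which, in each formula, bound variables are distinct and distinct from free variables; formulas are not identified modulo $\alpha$. Rules: (L$\rightarrow$) from $\Gamma'\vdash A_1,\dots,\Gamma'\vdash A_n$ infer $\Gamma\vdash P$, where $\Gamma=\Gamma_1,[\Gamma_2,[\dots\Gamma_{i-1},[\Gamma_i,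 A_1\rightarrow\dots\rightarrow A_n\rightarrow P]_{V_{i-1}}\dots]_{V_2}]_{V_1}$ ($i\ge1$), $\Gamma'=([\dots[[\Gamma_1]_{V_1},\Gamma_2]_{V_2},\dots,\Gamma_{i-1}]_{V_{i-1}},\Gamma_i,A_1\rightarrow\dots\rightarrow A_n\rightarrow P){\downarrow}$, $P$ atomic with no free variable in $V_1\cup\dots\cup V_{i-1}$; (R$\forall$) from $[\Gamma]_V{\downarrow}\vdash A$ infer $\Gamma\vdash\forall x\,A$, $V$ the set of all variables bound in $\forall x\,A$; (R$\rightarrow$) from $(\Gamma,A){\downarrow}\vdash B$ infer $\Gamma\vdash A\rightarrow B$. *)

From Stdlib Require Import List.
Import ListNotations.

Definition var := nat.

Inductive term : Type :=
| TVar (v : var)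
| TFn (f : nat) (ts : list term).

Fixpoint tvars (t : term) : list var :=
  match t with
  | TVar v => [v]
  | TFn _ ts =>
      (fix go (l : list term) : list var :=
         match l with [] => [] | u :: l' => tvars u ++ go l' end) ts
  end.

Inductive formula : Type :=
| Atom (P : nat) (ts : list term)
| Imp (A B : formula)
| All (x : var) (A : formula).

Fixpoint fvf (A : formula) : list var :=
  match A with
  | Atom _ ts => flat_map tvars ts
  | Imp A B => fvf A ++ fvf B
  | All x A => filter (fun v => negb (Nat.eqb v x)) (fvf A)
  end.

Fixpoint bvars (A : formula) : list var :=
  match A with
  | Atom _ _ => []
  | Imp A B => bvars A ++ bvars B
  | All x A => x :: bvars A
  end.

Inductive at_pos : formula -> list nat -> formula -> Prop :=
| ap_root A : at_pos A [] A
| ap_impl A B p C : at_pos A p C -> at_pos (Imp A B) (0 :: p) C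
| ap_impr A B p C : at_pos B p C -> at_pos (Imp A B) (1 :: p) C
| ap_all x A p C : at_pos A p C -> at_pos (All x A) (0 :: p) C.

(** [in_scope E y x] : y is in the scope of x in E, i.e. the position labelled
    forall x is a strict prefix of the position labelled forall y. *)
Definition in_scope (E : formula) (y x : var) : Prop :=
  exists p q Bx By r, at_pos E p (All x Bx) /\ at_pos E q (All y By) /\
    r <> [] /\ q = p ++ r.

(** V(x) in E: the variables bound in the subformula forall x A of E at the
    position labelled forall x. *)
Definition Vset (E : formula) (x : var) (v : var) : Prop :=
  exists p B, at_pos E p (All x B) /\ In v (bvars (All x B)).

(** LJB items and contexts (multisets represented as lists) *)
Inductive item : Type :=
| IForm (A : formula)
| IBr (V : list var) (G : list item).

Fixpoint ifv (i : item) (z : var) {struct i} : Prop :=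
  match i with
  | IForm A => In z (fvf A)
  | IBr V G => ~ In z V /\
      (fix go (l : list item) : Prop :=
         match l with [] => False | j :: l' => ifv j z \/ go l' end) G
  end.

(** equality of items / contexts as (nested) multisets, brackets bind finite sets *)
Inductive ieq : item -> item -> Prop :=
| ieq_form A : ieq (IForm A) (IForm A)
| ieq_br V V' G G' : (forall v, In v V <-> In v V') -> ceq G G' ->
    ieq (IBr V G) (IBr V' G')
with ceq : list item -> list item -> Prop :=
| ceq_nil : ceq [] []
| ceq_cons i i' G G' : ieq i i' -> ceq G G' -> ceq (i :: G) (i' :: G')
| ceq_swap i j G : ceq (i :: j :: G) (j :: i :: G)
| ceq_trans G1 G2 G3 : ceq G1 G2 -> ceq G2 G3 -> ceq G1 G3.

Inductive cstep : list item -> list item -> Prop :=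
| cs_out V I G R :
    ~ (exists v, In v V /\ ifv I v) ->
    cstep (IBr V (I :: G) :: R) (I :: IBr V G :: R)
| cs_empty V R : cstep (IBr V [] :: R) R
| cs_dup I I' R : ieq I I' -> cstep (I :: I' :: R) (I :: R)
| cs_in V G G' R : cstep G G' -> cstep (IBr V G :: R) (IBr V G' :: R)
| cs_tail i R R' : cstep R R' -> cstep (i :: R) (i :: R')
| cs_perm G1 G2 G3 : ceq G1 G2 -> cstep G2 G3 -> cstep G1 G3.

Inductive cstar : list item -> list item -> Prop :=
| cstar_refl G : cstar G G
| cstar_step G1 G2 G3 : cstep G1 G2 -> cstar G2 G3 -> cstar G1 G3.

Definition ctx_normal (G : list item) : Prop := ~ exists G', cstep G G'.

Definition item_normal (i : item) : Prop := ~ exists G', cstep [i] G'.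

(** [nf] computes normal forms (the fixed strategy): G -->* nf G, nf G normal *)
Definition is_nf (nf : list item -> list item) : Prop :=
  forall G, cstar G (nf G) /\ ctx_normal (nf G).

Inductive item_in : item -> list item -> Prop :=
| ii_here i G : In i G -> item_in i G
| ii_deep i V G' G : In (IBr V G') G -> item_in i G' -> item_in i G.

Definition formula_ok (A : formula) : Prop :=
  NoDup (bvars A) /\ (forall v, In v (bvars A) -> ~ In v (fvf A)).

Definition sequent := (list item * formula)%type.

Definition seq_ok (s : sequent) : Prop :=
  ctx_normal (fst s) /\
  (forall A, item_in (IForm A) (fst s) -> formula_ok A) /\
  formula_ok (snd s).

(** G1,[G2,[...G_{i-1},[G_i, inner]_{V_{i-1}}...]_{V2}]_{V1} *)
Fixpoint nestL (L : list (list item * list var)) (inner : list item) : list item :=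
  match L with
  | [] => inner
  | (G, V) :: L' => G ++ [IBr V (nestL L' inner)]
  end.

(** [...[[G1]_{V1},G2]_{V2},...,G_{i-1}]_{V_{i-1}} (empty when i = 1) *)
Definition nestR (L : list (list item * list var)) : list item :=
  fold_left (fun acc GV => [IBr (snd GV) (acc ++ fst GV)]) L [].

Definition arrows (As : list formula) (P : formula) : formula :=
  fold_right Imp P As.

Inductive rule (nf : list item -> list item) : list sequent -> sequent -> Prop :=
| r_L G L Gi As p ts :
    ceq G (nestL L (Gi ++ [IForm (arrows As (Atom p ts))])) ->
    (forall v, In v (flat_map snd L) -> ~ In v (fvf (Atom p ts))) ->
    rule nf
      (map (fun A => (nf (nestR L ++ Gi ++ [IForm (arrows As (Atom p ts))]), A)) As)
      (G, Atom p ts)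
| r_All G x A :
    rule nf [(nf [IBr (bvars (All x A)) G], A)] (G, All x A)
| r_Imp G A B :
    rule nf [(nf (G ++ [IForm A]), B)] (G, Imp A B).

Definition ljb_rule nf (ps : list sequent) (c : sequent) : Prop :=
  rule nf ps c /\ seq_ok c /\ Forall seq_ok ps.

Inductive deriv (nf : list item -> list item) : sequent -> Prop :=
| d_rule ps c : ljb_rule nf ps c -> (forall p, In p ps -> deriv nf p) -> deriv nf c.

Inductive occurs (nf : list item -> list item) (s : sequent) : sequent -> Prop :=
| occ_root c : deriv nf c -> s = c -> occurs nf s c
| occ_up ps c p : ljb_rule nf ps c -> (forall q, In q ps -> deriv nf q) ->
    In p ps -> occurs nf s p -> occurs nf s c.

From Stdlib Require Import List Classical.
Import ListNotations.

(* Every item occurring in a derivation of |- E is built from subformulas of E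
   and brackets [_]_{V(y)} for quantifier nodes forall y of E: this is preserved
   by cleaning and by the three rules.  In a normal bracket [D]_{V(y)} every
   member of D has a free variable in V(y), i.e. bound below the node forall y.
   By induction on items, the free variables of an item sitting at a node of E
   are bound strictly above that node (E is closed); since binders are distinct,
   a free variable of [D]_{V(y)}, not being in V(y), is bound strictly above
   forall y. *)

Lemma item_nested_ind (P : item -> Prop) :
  (forall A, P (IForm A)) ->
  (forall V G, (forall j, In j G -> P j) -> P (IBr V G)) ->
  forall i, P i.
Proof.
  intros HF HB. fix IH 1. intros [A|V G]; [apply HF|apply HB].
  induction G as [|a G IHG]; intros j Hj;
    [destruct Hj | destruct Hj as [<-|Hj]; [apply IH | exact (IHG j Hj)]].
Qed.

Lemma ifv_IBr V G z : ifv (IBr V G) z <-> ~ In z V /\ exists j, In j G /\ ifv j z.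
Proof.
  simpl. apply and_iff_compat_l. induction G as [|a G IH]; simpl.
  - firstorder.
  - rewrite IH. firstorder congruence.
Qed.

Lemma ieq_refl i : ieq i i.
Proof.
  induction i as [A|V G IH] using item_nested_ind; constructor; [tauto|].
  induction G; constructor; simpl in IH; auto.
Qed.

Lemma ceq_refl G : ceq G G.
Proof. induction G; constructor; auto using ieq_refl. Qed.

Lemma ceq_app_r G G' R : ceq G G' -> ceq (G ++ R) (G' ++ R).
Proof.
  induction 1; simpl; try solve [constructor; auto].
  - apply ceq_refl.
  - econstructor; eauto.
Qed.

Lemma ceq_move_front D1 J D2 : ceq (D1 ++ J :: D2) (J :: D1 ++ D2).
Proof.
  induction D1 as [|a D1 IH]; simpl; [apply ceq_refl|].
  eapply ceq_trans; [apply ceq_cons; [apply ieq_refl | exact IH] | apply ceq_swap].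
Qed.

Lemma cstep_app_r G G' R : cstep G G' -> cstep (G ++ R) (G' ++ R).
Proof.
  induction 1; simpl.
  - now apply cs_out.
  - apply cs_empty.
  - now apply cs_dup.
  - now apply cs_in.
  - now apply cs_tail.
  - eapply cs_perm; [apply ceq_app_r; eassumption | assumption].
Qed.

Lemma cstep_app_l L G G' : cstep G G' -> cstep (L ++ G) (L ++ G').
Proof. intros H; induction L; simpl; [exact H | now apply cs_tail]. Qed.

(* What normality yields: the cleaning rule [I, G]_V --> I, [G]_V never applies. *)
Inductive guarded : item -> Prop :=
| guarded_form A : guarded (IForm A)
| guarded_br W D :
    (forall J, In J D -> (exists g, In g W /\ ifv J g) /\ guarded J) ->
    guarded (IBr W D).

Lemma item_normal_guarded I : item_normal I -> guarded I.
Proof.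
  induction I as [A|W D IH] using item_nested_ind; intros Hn; constructor.
  intros J HJ. destruct (in_split _ _ HJ) as [D1 [D2 ->]]. split.
  - apply NNPP; intros Hno. apply Hn. exists [J; IBr W (D1 ++ D2)].
    apply (cs_perm _ [IBr W (J :: D1 ++ D2)]).
    + constructor; [|constructor]. constructor; [tauto | apply ceq_move_front].
    + now apply cs_out.
  - apply IH; [exact HJ|]. intros [G' HG']. apply Hn.
    exists [IBr W (D1 ++ G' ++ D2)]. apply cs_in, cstep_app_l, (cstep_app_r [J]), HG'.
Qed.

Lemma at_pos_app A p C r D : at_pos A p C -> at_pos C r D -> at_pos A (p ++ r) D.
Proof. induction 1; simpl; intros; try constructor; auto. Qed.

Lemma at_pos_app_inv A p r C D : at_pos A (p ++ r) D -> at_pos A p C -> at_pos C r D.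
Proof.
  revert A; induction p as [|n p IH]; simpl; intros A H1 H2.
  - now inversion H2; subst.
  - inversion H2; subst; inversion H1; subst; eauto.
Qed.

Lemma at_pos_functional A p C C' : at_pos A p C -> at_pos A p C' -> C = C'.
Proof. intros H; revert C'; induction H; intros C' H'; inversion H'; subst; auto. Qed.

Lemma in_bvars_at_pos C v : In v (bvars C) <-> exists r B, at_pos C r (All v B).
Proof.
  induction C as [P ts|A IHA B IHB|x A IH]; simpl.
  - split; [tauto | intros [r [B H]]; inversion H].
  - rewrite in_app_iff, IHA, IHB. split.
    + intros [[r [B' H]]|[r [B' H]]]; do 2 eexists; [apply ap_impl|apply ap_impr]; eauto.
    + intros [r [B' H]]; inversion H; subst; eauto.
  - rewrite IH. split.
    + intros [->|[r [B H]]]; [exists [], A | exists (0 :: r), B]; now constructor.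
    + intros [r [B H]]; inversion H; subst; eauto.
Qed.

Lemma NoDup_app_disjoint {T} (l l' : list T) a : NoDup (l ++ l') -> In a l -> ~ In a l'.
Proof.
  intros H Hl Hl'. destruct (in_split _ _ Hl') as [l1 [l2 ->]].
  rewrite app_assoc in H. apply NoDup_remove_2 in H. apply H, in_app_iff; left; apply in_app_iff; auto.
Qed.

Lemma at_pos_binder_unique E p q v A B : NoDup (bvars E) ->
  at_pos E p (All v A) -> at_pos E q (All v B) -> p = q.
Proof.
  revert p q; induction E as [P ts|E1 IH1 E2 IH2|x E IH]; simpl; intros p q Hnd H1 H2.
  - inversion H1.
  - pose proof (NoDup_app_remove_r _ _ Hnd). pose proof (NoDup_app_remove_l _ _ Hnd).
    inversion H1; subst; inversion H2; subst; try (f_equal; eauto; fail);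
      exfalso; eapply NoDup_app_disjoint; try exact Hnd; apply in_bvars_at_pos; eauto.
  - inversion Hnd; subst.
    inversion H1; subst; inversion H2; subst; f_equal; eauto;
      exfalso; match goal with Hx : ~ In _ _ |- _ => apply Hx end; apply in_bvars_at_pos; eauto.
Qed.

Definition bound_above (E : formula) (f : var) (a : list nat) : Prop :=
  exists pf Bf r, at_pos E pf (All f Bf) /\ r <> [] /\ a = pf ++ r.

Lemma bound_above_shift A q C f p :
  at_pos A q C -> bound_above C f p -> bound_above A f (q ++ p).
Proof.
  intros Hq [pf [Bf [r [Hpf [Hr ->]]]]].
  exists (q ++ pf), Bf, r. rewrite app_assoc. split; [eapply at_pos_app|]; eauto.
Qed.

Lemma fvf_at_pos A p B f :
  at_pos A p B -> In f (fvf B) -> In f (fvf A) \/ bound_above A f p.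
Proof.
  induction 1 as [|A B p C _ IH|A B p C _ IH|x A p C _ IH]; intros Hf; auto; simpl.
  - destruct (IH Hf) as [H|H]; [left; apply in_app_iff; auto|].
    right; apply (bound_above_shift _ [0] A); auto using at_pos.
  - destruct (IH Hf) as [H|H]; [left; apply in_app_iff; auto|].
    right; apply (bound_above_shift _ [1] B); auto using at_pos.
  - destruct (IH Hf) as [H|H].
    + destruct (PeanoNat.Nat.eq_dec f x) as [->|Hne].
      * right; exists [], A, (0 :: p); repeat split; [constructor | discriminate].
      * left; apply filter_In; split; [exact H|].
        apply Bool.negb_true_iff, PeanoNat.Nat.eqb_neq, Hne.
    + right; apply (bound_above_shift _ [0] A); auto using at_pos.
Qed.

Definition scope_at (E : formula) (V : list var) (a : list nat) : Prop :=
  exists y B, at_pos E a (All y B) /\ forall v, In v V <-> In v (bvars (All y B)).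

Definition anchored (E : formula) (I : item) (a : list nat) : Prop :=
  match I with
  | IForm A => at_pos E a A
  | IBr V _ => scope_at E V a
  end.

Inductive sub_item (E : formula) : item -> Prop :=
| sub_form A a : at_pos E a A -> sub_item E (IForm A)
| sub_br V G a : scope_at E V a -> (forall j, In j G -> sub_item E j) -> sub_item E (IBr V G).

Definition sub_ctx (E : formula) (G : list item) : Prop := forall j, In j G -> sub_item E j.

Definition sub_seq (E : formula) (s : sequent) : Prop :=
  sub_ctx E (fst s) /\ exists a, at_pos E a (snd s).

Lemma sub_item_anchored E I : sub_item E I -> exists a, anchored E I a.
Proof. destruct 1; simpl; eauto. Qed.

Lemma sub_item_IBr E V G : sub_item E (IBr V G) <-> (exists a, scope_at E V a) /\ sub_ctx E G.
Proof.
  split.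
  - intros H; inversion H; subst; split; eauto.
  - intros [[a Ha] HG]; econstructor; eauto.
Qed.

Lemma sub_ctx_app E G1 G2 : sub_ctx E (G1 ++ G2) <-> sub_ctx E G1 /\ sub_ctx E G2.
Proof. unfold sub_ctx; setoid_rewrite in_app_iff; firstorder. Qed.

Lemma sub_ctx_cons E i G : sub_ctx E (i :: G) <-> sub_item E i /\ sub_ctx E G.
Proof. unfold sub_ctx; simpl; firstorder congruence. Qed.

Scheme ieq_ceq_ind := Induction for ieq Sort Prop
  with ceq_ieq_ind := Induction for ceq Sort Prop.

Lemma ceq_sub_ctx E G G' : ceq G G' -> sub_ctx E G -> sub_ctx E G'.
Proof.
  apply (ceq_ieq_ind (fun i i' _ => sub_item E i -> sub_item E i')
                     (fun G G' _ => sub_ctx E G -> sub_ctx E G')); auto.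
  - intros V V' G0 G0' HV _ IH. rewrite !sub_item_IBr.
    intros [[a [y [B [Hy HVy]]]] HG]. split; [|auto].
    exists a, y, B; split; [exact Hy|]. intro v; rewrite <- HV; apply HVy.
  - intros i i' G0 G0' _ IHi _ IHG. rewrite !sub_ctx_cons. tauto.
  - intros i j G0. rewrite !sub_ctx_cons. tauto.
Qed.

Lemma cstep_sub_ctx E G G' : cstep G G' -> sub_ctx E G -> sub_ctx E G'.
Proof.
  induction 1; rewrite ?sub_ctx_cons, ?sub_item_IBr, ?sub_ctx_cons; try tauto.
  eauto using ceq_sub_ctx.
Qed.

Lemma cstar_sub_ctx E G G' : cstar G G' -> sub_ctx E G -> sub_ctx E G'.
Proof. induction 1; eauto using cstep_sub_ctx. Qed.

Lemma sub_ctx_nestL E L inner : sub_ctx E (nestL L inner) ->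
  sub_ctx E inner /\ forall G V, In (G, V) L -> sub_ctx E G /\ exists a, scope_at E V a.
Proof.
  induction L as [|[G V] L IH]; simpl; [firstorder|].
  rewrite sub_ctx_app, sub_ctx_cons, sub_item_IBr.
  intros [HG [[HV Hnest] _]]. destruct (IH Hnest) as [Hinner HL].
  split; [exact Hinner|]. intros G0 V0 [[= <- <-]|Hin]; auto.
Qed.

Lemma sub_ctx_nestR E L :
  (forall G V, In (G, V) L -> sub_ctx E G /\ exists a, scope_at E V a) ->
  sub_ctx E (nestR L).
Proof.
  intros HL. unfold nestR.
  enough (Hacc : forall acc, sub_ctx E acc ->
    sub_ctx E (fold_left (fun acc GV => [IBr (snd GV) (acc ++ fst GV)]) L acc))
    by (apply Hacc; intros j []).
  induction L as [|[G V] L IH]; simpl; intros acc Hacc; [exact Hacc|].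
  apply IH; [intros G0 V0 H; apply HL; now right|]. destruct (HL G V (or_introl eq_refl)) as [HG HV].
  apply sub_ctx_cons; split; [|intros j []]. apply sub_item_IBr; rewrite sub_ctx_app; auto.
Qed.

Lemma arrows_at_pos As P A : In A As -> exists r, at_pos (arrows As P) r A.
Proof.
  induction As as [|a As IH]; simpl; intros H; [contradiction|].
  destruct H as [->|H].
  - exists [0]; repeat constructor.
  - destruct (IH H) as [r Hr]; exists (1 :: r); now constructor.
Qed.

Lemma rule_sub_seq E nf ps c : is_nf nf -> rule nf ps c -> sub_seq E c ->
  forall p, In p ps -> sub_seq E p.
Proof.
  intros Hnf Hr [Hc [ac Hac]] p Hp.
  assert (Hnf_sub : forall G, sub_ctx E G -> sub_ctx E (nf G))
    by (intros G; apply cstar_sub_ctx, Hnf).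
  destruct Hr as [G L Gi As P ts Hceq HL|G y A|G A B]; simpl in *.
  - apply in_map_iff in Hp as [A [<- HA]].
    apply (ceq_sub_ctx E) in Hceq; [|exact Hc].
    apply sub_ctx_nestL in Hceq as [Hinner HL'].
    apply sub_ctx_app in Hinner as [HGi Harr]. split; simpl.
    + apply Hnf_sub. rewrite !sub_ctx_app. auto using sub_ctx_nestR.
    + apply sub_ctx_cons in Harr as [Harr _]. inversion Harr as [|? a Ha]; subst.
      destruct (arrows_at_pos As (Atom P ts) A HA) as [r Hr].
      exists (a ++ r). eapply at_pos_app; eauto.
  - destruct Hp as [<-|[]]. split; simpl.
    + apply Hnf_sub, sub_ctx_cons; split; [|intros j []].
      apply sub_item_IBr; split; [|exact Hc]. exists ac, y, A; split; [exact Hac | tauto].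
    + exists (ac ++ [0]). eapply at_pos_app; eauto. repeat constructor.
  - destruct Hp as [<-|[]]. split; simpl.
    + apply Hnf_sub, sub_ctx_app; split; [exact Hc|].
      apply sub_ctx_cons; split; [|intros j []].
      apply (sub_form _ _ (ac ++ [0])). eapply at_pos_app; eauto. repeat constructor.
    + exists (ac ++ [1]). eapply at_pos_app; eauto. repeat constructor.
Qed.

Lemma occurs_sub_seq E nf s c : is_nf nf -> occurs nf s c -> sub_seq E c -> sub_seq E s.
Proof.
  intros Hnf; induction 1 as [c _ ->|ps c p [Hr _] _ Hp _ IH]; intros Hc; auto.
  apply IH. eapply rule_sub_seq; eauto.
Qed.

Lemma item_in_sub_item E i G : item_in i G -> sub_ctx E G -> sub_item E i.
Proof.
  induction 1 as [i G Hi|i V G' G HV _ IH]; intros HG; auto.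
  apply IH. apply (sub_item_IBr E V G'), (HG _ HV).
Qed.

Lemma scope_at_In E W a f pf Bf s :
  scope_at E W a -> at_pos E pf (All f Bf) -> pf = a ++ s -> In f W.
Proof.
  intros [y [B [Hy HW]]] Hpf ->. apply HW, in_bvars_at_pos.
  exists s, Bf. eapply at_pos_app_inv; eauto.
Qed.

Lemma scope_at_bound_above_extends E W a g b : NoDup (bvars E) ->
  scope_at E W a -> In g W -> bound_above E g b -> exists s, b = a ++ s.
Proof.
  intros Hnd [y [B [Hy HW]]] Hg [pg [Bg [r [Hpg [_ ->]]]]].
  apply HW, in_bvars_at_pos in Hg as [s [Bg' Hs]].
  assert (pg = a ++ s) as -> by (eapply at_pos_binder_unique; eauto using at_pos_app).
  exists (s ++ r). now rewrite app_assoc.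
Qed.

Lemma bound_above_scope_exit E W a s f :
  scope_at E W a -> ~ In f W -> bound_above E f (a ++ s) -> bound_above E f a.
Proof.
  intros Ha Hf [pf [Bf [r [Hpf [Hr Heq]]]]].
  destruct (app_eq_app _ _ _ _ Heq) as [l [[Ha' _]|[Hpf' _]]].
  - destruct l as [|n l].
    + exfalso; apply Hf, (scope_at_In E W a f pf Bf []); [exact Ha | exact Hpf |].
      now rewrite Ha', !app_nil_r.
    + exists pf, Bf, (n :: l); repeat split; [exact Hpf | discriminate | exact Ha'].
  - exfalso; apply Hf; eapply scope_at_In; eauto.
Qed.

Lemma anchored_ifv_bound_above E I a f : fvf E = [] -> NoDup (bvars E) ->
  sub_item E I -> guarded I -> anchored E I a -> ifv I f -> bound_above E f a.
Proof.
  intros Hclosed Hnd HI. revert a f.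
  induction HI as [A p _|W D p _ Hsub IH]; intros a f Hg Ha Hf; simpl in Ha.
  - destruct (fvf_at_pos _ _ _ f Ha Hf) as [H|H]; [rewrite Hclosed in H; contradiction | exact H].
  - apply ifv_IBr in Hf as [HfW [J [HJ HfJ]]].
    inversion Hg as [|? ? HD]; subst. destruct (HD J HJ) as [[g [HgW HgJ]] HgdJ].
    destruct (sub_item_anchored _ _ (Hsub J HJ)) as [b Hb].
    pose proof (IH J HJ b g HgdJ Hb HgJ) as Hgb.
    pose proof (IH J HJ b f HgdJ Hb HfJ) as Hfb.
    destruct (scope_at_bound_above_extends E W a g b Hnd Ha HgW Hgb) as [s ->].
    exact (bound_above_scope_exit E W a s f Ha HfW Hfb).
Qed.

Lemma Vset_scope_at E x px Bx V : NoDup (bvars E) -> at_pos E px (All x Bx) ->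
  (forall v, In v V <-> Vset E x v) -> scope_at E V px.
Proof.
  intros Hnd Hpx HV. exists x, Bx; split; [exact Hpx|]. intro v; rewrite HV. split.
  - intros [p [B [Hp Hv]]].
    assert (p = px) as -> by (eapply at_pos_binder_unique; eauto).
    now injection (at_pos_functional _ _ _ _ Hp Hpx) as ->.
  - intros Hv; exists px, Bx; auto.
Qed.

Theorem proposition11 (nf : list item -> list item) (Hnf : is_nf nf)
  (E : formula) (x z : var) (V : list var) (Gam : list item) (s : sequent) :
  fvf E = [] ->
  NoDup (bvars E) ->
  In x (bvars E) ->
  occurs nf s ([], E) ->
  item_in (IBr V Gam) (fst s) ->
  item_normal (IBr V Gam) ->
  (forall v, In v V <-> Vset E x v) ->
  ifv (IBr V Gam) z ->
  in_scope E x z.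
Proof.
  intros Hclosed Hnd Hx Hocc Hin Hnorm HV Hz.
  assert (Hs : sub_seq E s).
  { apply (occurs_sub_seq E nf s ([], E) Hnf Hocc).
    split; [intros j [] | exists []; constructor]. }
  assert (Hsub : sub_item E (IBr V Gam)) by exact (item_in_sub_item E _ _ Hin (proj1 Hs)).
  apply in_bvars_at_pos in Hx as [px [Bx Hpx]].
  assert (Hanch : anchored E (IBr V Gam) px) by exact (Vset_scope_at E x px Bx V Hnd Hpx HV).
  destruct (anchored_ifv_bound_above E _ px z Hclosed Hnd Hsub (item_normal_guarded _ Hnorm) Hanch Hz)
    as [pz [Bz [r [Hpz [Hr ->]]]]].
  exists pz, (pz ++ r), Bz, Bx, r; auto.
Qed.
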